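(* Let $\mathcal X=\{\vec x^{(1)},\dots,\vec x^{(M)}\}\subset\mathbb{R}^d$, and let $\vec u\subseteq[d]$. For each $\vec v\subseteq\vec u$ let $\mathcal I_{\vec v}$ be a finite family of frequency vectors $\vec\omega\in\mathbb{R}^d$ with $\vec\omega_{\vec v^c}=\vec 0$ (with $\mathcal I_\varnothing=\{\vec 0\}$), let $\vec A_{\vec v}=\left(\mathrm{e}^{\mathrm{i}\langle\vec\omega_{\vec v},\vec x_{\vec v}\rangle}\right)_{\vec x\in\mathcal X,\vec\omega\in\mathcal I_{\vec v}}\in\mathbb{C}^{M\times|\mathcal I_{\vec v}|}$, let $\vec a_{\vec v}\in\mathbb{C}^{|\mathcal I_{\vec v}|}$, and let $f_{\vec v}$ denote the function on $\mathcal X$ given by the vector $\vec A_{\vec v}\vec a_{\vec v}$, i.e. $f_{\vec v}(\vec x_{\vec v})=\sum_{\vec\omega\in\mathcal I_{\vec v}}(\vec a_{\vec v})_{\vec\omega}\mathrm{e}^{\mathrm{i}\langle\vec\omega_{\vec v},\vec x_{\vec v}\rangle}$. Define $$\hat{\vec W}_{\vec u}=\frac{1}{M^2}\vec A_{\vec u}^*\Big(\sum_{\vec v\subsetneq\vec u}\vec A_{\vec v}\vec A_{\vec v}^*\Big)\vec A_{\vec u}.$$ Then $$\vec a_{\vec u}^*\hat{\vec W}_{\vec u}\vec a_{\vec u}\ge\sum_{\vec v\subsetneq\vec u,\ \vec a_{\vec v}\neq\vec 0}\frac{1}{\|\vec a_{\vec v}\|_2^2}\,\big|\langle f_{\vec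 u},f_{\vec v}\rangle_{\mathcal X}\big|^2,$$ where $\langle g,h\rangle_{\mathcal X}=\frac1M\sum_{\vec x\in\mathcal X}g(\vec x)\overline{h(\vec x)}$.
   Context: $[d]=\{1,\dots,d\}$, $\vec x_{\vec v}=(x_i)_{i\in\vec v}$, $\vec v^c=[d]\setminus\vec v$; the sum over $\vec v\subsetneq\vec u$ includes $\vec v=\varnothing$. $\vec A^*$ denotes the conjugate transpose. *)

From mathcomp Require Import all_boot all_order all_algebra.
From mathcomp Require Import complex.
From mathcomp Require Import reals trigo.
Set Implicit Arguments. Unset Strict Implicit. Unset Printing Implicit Defensive.
Import GRing.Theory Num.Theory.
Local Open Scope ring_scope.
Local Open Scope complex_scope.

Definition expi (R : realType) (t : R) : R[i] := cos t +i* sin t.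

Definition adjmx (C : numClosedFieldType) (m n : nat) (A : 'M[C]_(m, n)) : 'M[C]_(n, m) :=
  (map_mx Num.conj A)^T.

Definition dotv (R : realType) (d : nat) (v : {set 'I_d}) (w x : 'rV[R]_d) : R :=
  \sum_(j in v) w 0 j * x 0 j.

Definition Amat (R : realType) (d M : nat) (X : 'I_M -> 'rV[R]_d)
  (v : {set 'I_d}) (n : nat) (om : 'I_n -> 'rV[R]_d) : 'M[R[i]]_(M, n) :=
  \matrix_(i < M, k < n) expi (dotv v (om k) (X i)).

(* <g, h>_X = 1/M sum_{x in X} g(x) conj(h(x)), functions on X as vectors in C^M *)
Definition innerX (C : numClosedFieldType) (M : nat) (g h : 'cV[C]_M) : C :=
  (M%:R)^-1 * \sum_(i < M) g i 0 * (h i 0)^*.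

Definition sqnorm2 (C : numClosedFieldType) (n : nat) (a : 'cV[C]_n) : C :=
  \sum_(k < n) `|a k 0| ^+ 2.

From mathcomp Require Import all_boot all_order all_algebra.
From mathcomp Require Import complex.
From mathcomp Require Import reals trigo.
Set Implicit Arguments. Unset Strict Implicit. Unset Printing Implicit Defensive.
Import Order.TTheory GRing.Theory Num.Theory.
Local Open Scope ring_scope.
Local Open Scope complex_scope.

(* With f_u = A_u a_u, the quadratic form a_u^* W_u a_u equals
   M^-2 sum_v ||A_v^* f_u||^2, while M <f_u, f_v>_X = <A_v^* f_u, a_v>.
   The inequality is thus Cauchy-Schwarz applied term by term, dropping the
   nonnegative terms with a_v = 0.  It holds for arbitrary matrices A_v. *)

Section AdjointColumns.
Variable C : numClosedFieldType.

Lemma adjmxM m n p (A : 'M[C]_(m, n)) (B : 'M_(n, p)) :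
  adjmx (A *m B) = adjmx B *m adjmx A.
Proof. by rewrite /adjmx map_mxM trmx_mul. Qed.

Lemma adjmxK m n (A : 'M[C]_(m, n)) : adjmx (adjmx A) = A.
Proof. by apply/matrixP => i j; rewrite !mxE conjCK. Qed.

Lemma adjmx_mul_dotmx n (x y : 'cV[C]_n) : (adjmx x *m y) 0 0 = dotmx y^T x^T.
Proof. by rewrite dotmxE !mxE; apply: eq_bigr => k _; rewrite !mxE mulrC. Qed.

Lemma sqnorm2_dotmx n (x : 'cV[C]_n) : sqnorm2 x = dotmx x^T x^T.
Proof.
by rewrite -adjmx_mul_dotmx mxE; apply: eq_bigr => k _; rewrite !mxE mulrC normCK.
Qed.

Lemma sqnorm2_ge0 n (x : 'cV[C]_n) : 0 <= sqnorm2 x.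
Proof. by rewrite sqnorm2_dotmx dnorm_ge0. Qed.

Lemma sqnorm2_gt0 n (x : 'cV[C]_n) : (0 < sqnorm2 x) = (x != 0).
Proof. by rewrite sqnorm2_dotmx dnorm_gt0 trmx_eq0. Qed.

Lemma adjmx_mul_CauchySchwarz n (x y : 'cV[C]_n) :
  `|(adjmx x *m y) 0 0| ^+ 2 <= sqnorm2 x * sqnorm2 y.
Proof.
by rewrite adjmx_mul_dotmx !sqnorm2_dotmx mulrC; apply: (CauchySchwarz _ _ _).1.
Qed.

Lemma sqnorm2_adjmx_mul n p (G : 'M[C]_(n, p)) (x : 'cV_n) :
  (adjmx x *m (G *m adjmx G) *m x) 0 0 = sqnorm2 (adjmx G *m x).
Proof. by rewrite sqnorm2_dotmx -adjmx_mul_dotmx adjmxM adjmxK !mulmxA. Qed.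

Lemma quad_form_sum_gram (I : finType) (P : pred I) (p : I -> nat) m n
    (G : forall i, 'M[C]_(m, p i)) (B : 'M_(m, n)) (x : 'cV_n) :
  (adjmx x *m (adjmx B *m (\sum_(i | P i) G i *m adjmx (G i)) *m B) *m x) 0 0
  = \sum_(i | P i) sqnorm2 (adjmx (G i) *m (B *m x)).
Proof.
have -> : adjmx x *m (adjmx B *m (\sum_(i | P i) G i *m adjmx (G i)) *m B) *m x
    = adjmx (B *m x) *m (\sum_(i | P i) G i *m adjmx (G i)) *m (B *m x).
  by rewrite adjmxM !mulmxA.
rewrite mulmx_sumr mulmx_suml summxE.
by apply: eq_bigr => i _; apply: sqnorm2_adjmx_mul.
Qed.

Lemma innerXE m (g h : 'cV[C]_m) : innerX g h = m%:R^-1 * (adjmx h *m g) 0 0.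
Proof.
by rewrite /innerX mxE; congr (_ * _); apply: eq_bigr => i _; rewrite !mxE mulrC.
Qed.

Lemma sqr_innerX_mulmx_le m n (g : 'cV[C]_m) (B : 'M_(m, n)) (y : 'cV_n) :
  y != 0 ->
  `|innerX g (B *m y)| ^+ 2 / sqnorm2 y <= (m%:R ^+ 2)^-1 * sqnorm2 (adjmx B *m g).
Proof.
rewrite -sqnorm2_gt0 => y_gt0.
rewrite innerXE adjmxM -mulmxA normrM exprMn normfV normr_nat -exprVn -mulrA.
rewrite ler_wpM2l ?exprn_ge0 ?invr_ge0 ?ler0n // ler_pdivrMr // mulrC.
exact: adjmx_mul_CauchySchwarz.
Qed.

End AdjointColumns.

Theorem lemma4p5 (R : realType) (d M : nat) (X : 'I_M -> 'rV[R]_d)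
  (u : {set 'I_d}) (n : {set 'I_d} -> nat)
  (om : forall v : {set 'I_d}, 'I_(n v) -> 'rV[R]_d)
  (a : forall v : {set 'I_d}, 'cV[R[i]]_(n v)) :
  (forall v : {set 'I_d}, v \subset u ->
     forall (k : 'I_(n v)) (j : 'I_d), j \notin v -> om v k 0 j = 0) ->
  n set0 = 1%N ->
  (forall k : 'I_(n set0), om set0 k = 0) ->
  let A := fun v : {set 'I_d} => Amat X v (om v) in
  let f := fun v : {set 'I_d} => A v *m a v in
  let W := ((M%:R : R[i]) ^+ 2)^-1 *:
      (adjmx (A u) *m (\sum_(v : {set 'I_d} | v \proper u) A v *m adjmx (A v)) *m A u) in
  \sum_(v : {set 'I_d} | (v \proper u) && (a v != 0))
      `|innerX (f u) (f v)| ^+ 2 / sqnorm2 (a v)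
    <= (adjmx (a u) *m W *m a u) 0 0.
Proof.
move=> _ _ _; cbv zeta.
set A := fun v => Amat X v (om v); set f := fun v => A v *m a v; set W := _ *: _.
have -> : (adjmx (a u) *m W *m a u) 0 0 = ((M%:R ^+ 2)^-1 : R[i]) *
    \sum_(v : {set 'I_d} | v \proper u) sqnorm2 (adjmx (A v) *m f u).
  by rewrite /W -scalemxAr -scalemxAl mxE quad_form_sum_gram.
rewrite mulr_sumr big_mkcondr /=; apply: ler_sum => v _.
case: ifPn => [av_neq0 | _]; first exact: sqr_innerX_mulmx_le.
by rewrite mulr_ge0 ?sqnorm2_ge0 // invr_ge0 exprn_ge0 ?ler0n.
Qed.
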